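(* Let $n\ge 3$ be an integer and let $\{D_I\}_{I\in\binom{[n]}{n-1}}$ be a family of positive real numbers, where $[n]=\{1,\dots,n\}$; write $D_{\hat i}=D_{[n]\setminus\{i\}}$ for $i\in[n]$. There exists a positive-weighted tree $\mathcal T=(T,w)$ with vertex set exactly $V(T)=[n]$ such that $D_{\hat i}(\mathcal T)=D_{\hat i}$ for all $i\in[n]$ if and only if the following three conditions hold: (i) $(n-2)D_{\hat i}\le \sum_{j\in[n]\setminus\{i\}} D_{\hat j}$ for every $i\in[n]$, and at most one of these inequalities is an equality; (ii) either one of the inequalities in (i) is an equality, or the maximum of $\{D_{\hat i}\}_{i\in[n]}$ is attained by at least two indices $i$; (iii) the maximum of $\{D_{\hat i}\}_{i\in[n]}$ is attained by at most $n-2$ indices $i$.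
   Context: All graphs are simple and finite. A positive-weighted graph $\mathcal G=(G,w)$ is a graph $G$ with a function $w:E(G)\to\mathbb R_{>0}$; for a subgraph $G'$, $w(G')$ is the sum of the weights of the edges of $G'$. For distinct vertices $i_1,\dots,i_k$ of $G$, $D_{\{i_1,\dots,i_k\}}(\mathcal G)$ is the minimum of $w(R)$ over all connected subgraphs $R$ of $G$ whose vertex set contains $i_1,\dots,i_k$. We write $D_{\hat i}(\mathcal G)=D_{[n]\setminus\{i\}}(\mathcal G)$. *)

From mathcomp Require Import all_boot all_order all_algebra.
Set Implicit Arguments. Unset Strict Implicit. Unset Printing Implicit Defensive.
Import Order.TTheory GRing.Theory Num.Theory.
Local Open Scope ring_scope.

Definition simple_graph n (adj : rel 'I_n) : Prop :=
  (forall i, ~~ adj i i) /\ (forall i j, adj i j = adj j i).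

(* Positive weights on the edges; the weight of the edge {i,j} (i<j) is w i j. *)
Definition pos_weights (R : numDomainType) n (adj : rel 'I_n)
  (w : 'I_n -> 'I_n -> R) : Prop :=
  forall i j, adj i j -> 0 < w i j.

Definition graph_connected n (adj : rel 'I_n) : Prop :=
  forall x y, connect adj x y.

Definition acyclic n (adj : rel 'I_n) : Prop :=
  forall s : seq 'I_n, uniq s -> (3 <= size s)%N -> ~~ cycle adj s.

Definition is_tree n (adj : rel 'I_n) : Prop :=
  simple_graph adj /\ graph_connected adj /\ acyclic adj.

Definition is_subgraph n (adj : rel 'I_n) (VR : {set 'I_n})
  (ER : {set 'I_n * 'I_n}) : Prop :=
  forall p, p \in ER -> [/\ (p.1 < p.2)%N, adj p.1 p.2, p.1 \in VR & p.2 \in VR].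

Definition sub_adj n (ER : {set 'I_n * 'I_n}) : rel 'I_n :=
  fun a b => ((a, b) \in ER) || ((b, a) \in ER).

Definition sub_connected n (VR : {set 'I_n}) (ER : {set 'I_n * 'I_n}) : Prop :=
  forall x y, x \in VR -> y \in VR -> connect (sub_adj ER) x y.

Definition sub_weight (R : numDomainType) n (w : 'I_n -> 'I_n -> R)
  (ER : {set 'I_n * 'I_n}) : R :=
  \sum_(p in ER) w p.1 p.2.

(* d is D_S(G,w): the minimum weight of a connected subgraph whose vertex
   set contains S. *)
Definition is_D (R : numDomainType) n (adj : rel 'I_n) (w : 'I_n -> 'I_n -> R)
  (S : {set 'I_n}) (d : R) : Prop :=
  (exists VR ER, [/\ is_subgraph adj VR ER, sub_connected VR ER,
                     S \subset VR & sub_weight w ER = d]) /\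
  (forall VR ER, is_subgraph adj VR ER -> sub_connected VR ER ->
                 S \subset VR -> d <= sub_weight w ER).

(* On a positive-weighted tree with total weight W, D_{\hat j} equals W when j is
   internal (two neighbours of j can only be joined through j) and W minus the
   weight of its edge when j is a leaf.  For any M,
     sum_{k <> i} D_k - (n - 2) D_i = (n - 1) (M - D_i) + (M - sum_k (M - D_k)),
   and at M = W the last sum is the weight L <= W of the edges at leaves.  Hence
   (i) holds, with equality at i exactly when i is internal and every edge has a
   leaf end, i.e. the tree is a star centred at i; two internal vertices both
   attain the maximum W, and the (at least two) leaves stay below it.
   Conversely, with M = max D the identity gives T := sum_k (M - D_k) <= M, with
   T = M if M is attained once and T < M otherwise.  A caterpillar realises D:
   the maximisers form the spine, sharing the weight M - T equally among its
   edges, and every other vertex v is a leaf at an end of the spine, on an edge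
   of weight M - D_v. *)

From mathcomp Require Import all_boot all_order all_algebra.
From mathcomp Require Import ring zify.
Set Implicit Arguments. Unset Strict Implicit. Unset Printing Implicit Defensive.
Import Order.TTheory GRing.Theory Num.Theory.

Definition nbhd n (adj : rel 'I_n) (j : 'I_n) : {set 'I_n} := [set u | adj j u].

Definition leaf n (adj : rel 'I_n) (j : 'I_n) : bool := (#|nbhd adj j| <= 1)%N.

Lemma leafP n (adj : rel 'I_n) j :
  reflect (forall u v, adj j u -> adj j v -> u = v) (leaf adj j).
Proof.
apply: (iffP card_le1_eqP) => [H u v Hu Hv|H u v]; last by rewrite !inE => Hu Hv; exact: H.
by apply: H; rewrite inE.
Qed.

Section AcyclicGraph.
Variables (n : nat) (adj : rel 'I_n).
Hypotheses (adj_irr : irreflexive adj) (adj_sym : symmetric adj).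
Hypothesis adj_acyclic : acyclic adj.

Lemma adj_neq a b : adj a b -> a != b.
Proof. by apply: contraTneq => ->; rewrite adj_irr. Qed.

Lemma subrel_connect_edge (e : rel 'I_n) : subrel e adj ->
  forall a b, connect e a b -> adj a b -> e a b.
Proof.
move=> sub_e a b /connectP [p Hp Hl] Hab.
case: (shortenP Hp) Hl => p' Hp' Hu _ Hl.
case: p' Hp' Hu Hl => [|y [|z q]] /= Hp' Hu Hl.
- by move: Hab; rewrite Hl adj_irr.
- by rewrite Hl; case/andP: Hp'.
exfalso; move/negP: (adj_acyclic (s := a :: y :: z :: q) Hu isT); apply.
rewrite /cycle (rcons_path adj a (y :: z :: q) a) /= -Hl (adj_sym b) Hab andbT.
exact: (sub_path sub_e (x := a) (p := y :: z :: q) Hp').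
Qed.

(* The a-b path followed by b - j - a would be a cycle unless it passes through j. *)
Lemma subrel_connect_through (e : rel 'I_n) : subrel e adj ->
  forall a b j, adj a j -> adj b j -> a != b -> connect e a b -> connect e a j.
Proof.
move=> sub_e a b j Haj Hbj Hab /connectP [p Hp Hl].
case: (shortenP Hp) Hl => p' Hp' Hu _ Hl.
have [jin|jnin] := boolP (j \in a :: p').
  rewrite inE eq_sym (negbTE (adj_neq Haj)) /= in jin.
  case/splitPr: jin Hp' Hu Hl => p1 p2 Hp' _ _.
  apply/connectP; exists (rcons p1 j); last by rewrite last_rcons.
  by rewrite rcons_path; move: Hp'; rewrite cat_path => /andP[-> /andP[]].
have Hu2 : uniq (j :: a :: p') by rewrite /= jnin.
have Hs : (3 <= size (j :: a :: p'))%N.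
  by case: p' Hp' Hu Hl {jnin Hu2} => [|y q] //= _ _ Hl; rewrite Hl eqxx in Hab.
exfalso; move/negP: (adj_acyclic Hu2 Hs); apply.
rewrite /cycle /= adj_sym Haj /= rcons_path -Hl Hbj andbT.
exact: (sub_path sub_e).
Qed.

Lemma connect_avoid_leaf j a b : leaf adj j -> a != j -> b != j -> connect adj a b ->
  exists2 p, path adj a p & last a p = b /\ all (predC1 j) (a :: p).
Proof.
move=> /leafP Hj Haj Hbj /connectP [p0 Hp0 Hl0].
case: (shortenP Hp0) Hl0 => p Hp Hu _ Hl.
exists p => //; split => //.
apply/allP => x Hx; apply/negP => /eqP Exj; subst x.
move: Hx; rewrite inE eq_sym (negbTE Haj) /= => Hx.
case/splitPr: Hx Hp Hu Hl => p1 p2 Hp Hu Hl.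
case: p2 Hp Hu Hl => [|y p3] Hp Hu Hl.
  by move: Hbj; rewrite Hl last_cat /= eqxx.
move: Hp; rewrite cat_path => /andP [_ /= /and3P [Hxj Hjy _]].
have Ey : last a p1 = y by apply: Hj; rewrite // adj_sym.
move: Hu; rewrite -cat_cons cat_uniq => /and3P [_ /negP Hh _]; apply: Hh.
by apply/hasP; exists y; [rewrite !inE eqxx orbT | rewrite -Ey mem_last].
Qed.

Definition upath (x : 'I_n) (t : seq 'I_n) := uniq (x :: t) && path adj x t.

Lemma upath_size x t : upath x t -> (size t < n)%N.
Proof.
case/andP => Hu _; have := card_uniqP Hu; rewrite /= => <-.
by have := max_card (mem (x :: t)); rewrite card_ord.
Qed.

Lemma upath_rev x t : upath x t -> upath (last x t) (rev (belast x t)).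
Proof.
case/andP => Hu Hp; rewrite /upath rev_path; apply/andP; split.
  by rewrite -rev_rcons -lastI rev_uniq.
by rewrite (eq_path (e' := adj)) // => u v; rewrite adj_sym.
Qed.

(* A neighbour of x off a longest path would either extend it or close a cycle. *)
Lemma longest_upath_leaf x t : upath x t ->
  (forall x' t', upath x' t' -> (size t' <= size t)%N) -> leaf adj x.
Proof.
move=> Hxt Hmax; apply/leafP.
suff H z : adj x z -> z = head x t by move=> u v /H -> /H ->.
move=> Hz; case/andP: Hxt => Hu Hp.
case: t Hu Hp Hmax => [|y t] Hu Hp Hmax /=.
  have : upath z [:: x] by rewrite /upath /= inE adj_sym Hz eq_sym adj_neq.
  by move/Hmax.
have [//|Hzy] := eqVneq z y; exfalso.
have [zin|znin] := boolP (z \in x :: y :: t); last first.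
  have : upath z (x :: y :: t).
    by rewrite /upath cons_uniq znin Hu /= adj_sym Hz; exact: Hp.
  by move/Hmax; rewrite /= ltnn.
move: zin; rewrite !inE eq_sym (negbTE (adj_neq Hz)) (negbTE Hzy) /= => zin.
case/splitPr: zin Hu Hp => t1 t2 Hu Hp.
have Hu2 : uniq (x :: y :: rcons t1 z).
  by move: Hu; rewrite -!cat_cons -cat_rcons cat_uniq => /andP [].
have Hs : (3 <= size (x :: y :: rcons t1 z))%N by rewrite /= size_rcons.
move/negP: (adj_acyclic Hu2 Hs); apply.
rewrite /cycle rcons_path /= last_rcons (adj_sym z) Hz andbT.
by move: Hp => /= /andP [-> ]; rewrite -cat_rcons cat_path => /andP [-> _].
Qed.

(* Both ends of a longest path are leaves. *)
Lemma exists_two_leaves a b : adj a b ->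
  exists l1 l2, [/\ l1 != l2, leaf adj l1 & leaf adj l2].
Proof.
move=> Hab.
pose P m := [exists x, exists t : m.-tuple 'I_n, upath x t].
have Pab : upath a [:: b] by rewrite /upath /= inE adj_neq //= Hab.
have exP : exists m, P m.
  by exists 1%N; apply/existsP; exists a; apply/existsP; exists [tuple b].
have ubP m : P m -> (m <= n)%N.
  by move=> /existsP [x /existsP [t /upath_size]]; rewrite size_tuple; exact: ltnW.
case: (ex_maxnP exP ubP) => m /existsP [x /existsP [t Hxt]] Hm.
have Hmax x' t' : upath x' t' -> (size t' <= size t)%N.
  move=> H; rewrite size_tuple; apply: Hm.
  by apply/existsP; exists x'; apply/existsP; exists (in_tuple t').
have Ht : (0 < size t)%N.
  by rewrite size_tuple; apply: Hm; apply/existsP; exists a; apply/existsP; exists [tuple b].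
exists x, (last x t); split.
- move: Hxt Ht; rewrite /upath; case: (tval t) => [|y t0] //= /andP [/andP [Hx _] _] _.
  by apply: contraNneq Hx => ->; apply: mem_last.
- exact: longest_upath_leaf Hxt Hmax.
apply: (longest_upath_leaf (upath_rev Hxt)) => x' t' /Hmax.
by rewrite size_rev size_belast.
Qed.

End AcyclicGraph.

Lemma tree_irr n (adj : rel 'I_n) : is_tree adj -> irreflexive adj.
Proof. by case=> [[H _] _] i; apply: negbTE. Qed.

Lemma tree_sym n (adj : rel 'I_n) : is_tree adj -> symmetric adj.
Proof. by case=> [[_ H] _]. Qed.

Lemma tree_connected n (adj : rel 'I_n) : is_tree adj -> graph_connected adj.
Proof. by case=> _ []. Qed.

Lemma tree_acyclic n (adj : rel 'I_n) : is_tree adj -> acyclic adj.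
Proof. by case=> _ []. Qed.

Local Open Scope ring_scope.

Definition tree_edges n (adj : rel 'I_n) : {set 'I_n * 'I_n} :=
  [set p : 'I_n * 'I_n | (p.1 < p.2)%N && adj p.1 p.2].

Definition edges_avoiding n (adj : rel 'I_n) (j : 'I_n) : {set 'I_n * 'I_n} :=
  [set p in tree_edges adj | (p.1 != j) && (p.2 != j)].

Definition total_weight (R : numDomainType) n (adj : rel 'I_n) (w : 'I_n -> 'I_n -> R) : R :=
  sub_weight w (tree_edges adj).

Definition tree_Dhat (R : numDomainType) n (adj : rel 'I_n) (w : 'I_n -> 'I_n -> R) j : R :=
  if leaf adj j then sub_weight w (edges_avoiding adj j) else total_weight adj w.

Definition edge_of n (a b : 'I_n) : 'I_n * 'I_n := if (a < b)%N then (a, b) else (b, a).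

Lemma edge_of_incident n (a b : 'I_n) : ((edge_of a b).1 == a) || ((edge_of a b).2 == a).
Proof. by rewrite /edge_of; case: ifP => _ /=; rewrite eqxx ?orbT. Qed.

Lemma edge_of_adj n (adj : rel 'I_n) a b : symmetric adj -> adj a b ->
  adj (edge_of a b).1 (edge_of a b).2.
Proof. by rewrite /edge_of => adj_sym Hab; case: ifP; rewrite //= adj_sym. Qed.

Lemma edge_of_mem n (adj : rel 'I_n) a b : irreflexive adj -> symmetric adj -> adj a b ->
  edge_of a b \in tree_edges adj.
Proof.
move=> adj_irr adj_sym Hab; rewrite inE edge_of_adj // andbT /edge_of.
by case: (ltngtP a b) => [//|//|/val_inj Eab]; rewrite Eab adj_irr in Hab.
Qed.

Lemma is_D_unique (R : realDomainType) n (adj : rel 'I_n) w S (d1 d2 : R) :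
  is_D adj w S d1 -> is_D adj w S d2 -> d1 = d2.
Proof.
move=> [[V1 [E1 [H1 H2 H3 <-]]] L1] [[V2 [E2 [K1 K2 K3 <-]]] L2].
by apply/le_anti; rewrite (L1 V2 E2) ?(L2 V1 E1).
Qed.

Lemma sub_adj_sym n (ER : {set 'I_n * 'I_n}) : symmetric (sub_adj ER).
Proof. by move=> a b; rewrite /sub_adj orbC. Qed.

Section TreeDhat.
Variables (R : realFieldType) (n : nat) (adj : rel 'I_n) (w : 'I_n -> 'I_n -> R).
Hypotheses (adj_tree : is_tree adj) (w_pos : pos_weights adj w).

Let adj_irr := tree_irr adj_tree.
Let adj_sym := tree_sym adj_tree.
Let adj_acyclic := tree_acyclic adj_tree.

Lemma sub_adj_tree_edges : sub_adj (tree_edges adj) =2 adj.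
Proof.
move=> a b; rewrite /sub_adj !inE /=.
by case: (ltngtP a b) => [_|_|/val_inj ->]; rewrite ?orbF ?adj_irr // adj_sym.
Qed.

Lemma sub_adj_edges_avoiding j a b : adj a b -> a != j -> b != j ->
  sub_adj (edges_avoiding adj j) a b.
Proof.
move=> Hab Ha Hb; rewrite /sub_adj !inE /= Ha Hb /= andbT.
case: (ltngtP a b) => [_|_|/val_inj Eab]; first by rewrite Hab.
  by rewrite (adj_sym b) Hab orbT.
by rewrite Eab adj_irr in Hab.
Qed.

Lemma tree_edge_weight_ge0 p : p \in tree_edges adj -> 0 <= w p.1 p.2.
Proof. by rewrite inE => /andP [_ /w_pos /ltW]. Qed.

Lemma sub_weight_le (X Y : {set 'I_n * 'I_n}) : X \subset Y -> Y \subset tree_edges adj ->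
  sub_weight w X <= sub_weight w Y.
Proof.
move=> sXY sY; rewrite /sub_weight [leRHS](bigID (mem X)) /=.
have -> : \sum_(p in X) w p.1 p.2 = \sum_(p in Y | p \in X) w p.1 p.2.
  apply: eq_bigl => p; case: (boolP (p \in X)) => pX; rewrite ?andbF //.
  by rewrite andbT (subsetP sXY _ pX).
rewrite lerDl; apply: sumr_ge0 => p /andP [pY _].
exact: tree_edge_weight_ge0 (subsetP sY _ pY).
Qed.

Section ConnectedCover.
Variables (VR : {set 'I_n}) (ER : {set 'I_n * 'I_n}) (j : 'I_n).
Hypotheses (ER_sub : is_subgraph adj VR ER) (ER_conn : sub_connected VR ER).
Hypothesis VR_cover : [set~ j] \subset VR.

Lemma subgraph_sub_adj : subrel (sub_adj ER) adj.
Proof. by move=> a b /orP [] /ER_sub [_ /= ? _ _] //; rewrite adj_sym. Qed.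

Lemma subgraph_edges : ER \subset tree_edges adj.
Proof. by apply/subsetP => p /ER_sub [? ? _ _]; rewrite inE; apply/andP. Qed.

Lemma subgraph_mem_edge p : p \in tree_edges adj -> sub_adj ER p.1 p.2 -> p \in ER.
Proof.
rewrite inE => /andP [lt12 _] /orP [|/ER_sub [lt21 _ _ _]]; first by rewrite -surjective_pairing.
by move: lt21; rewrite /= ltnNge ltnW.
Qed.

Let cover_mem x : x != j -> x \in VR.
Proof. by move=> Hx; apply: (subsetP VR_cover); rewrite !inE. Qed.

Lemma connected_cover_avoiding : edges_avoiding adj j \subset ER.
Proof.
apply/subsetP => p; rewrite inE => /andP [pE /andP [H1 H2]].
apply: (subgraph_mem_edge pE).
apply: (subrel_connect_edge adj_irr adj_sym adj_acyclic subgraph_sub_adj).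
  by apply: ER_conn; apply: cover_mem.
by move: pE; rewrite inE => /andP [].
Qed.

(* Two neighbours of an internal vertex j are connected in ER only through j. *)
Lemma connected_cover_internal : ~~ leaf adj j -> tree_edges adj \subset ER.
Proof.
rewrite /leaf -ltnNge => /card_gt1P [u [v]]; rewrite !inE => -[Hu Hv Huv].
have to_j x : adj j x -> sub_adj ER x j.
  move=> Hx; have [y Hy Hxy] : exists2 y, adj j y & x != y.
    by case: (eqVneq x u) => [->|]; [exists v | exists u].
  apply: (subrel_connect_edge adj_irr adj_sym adj_acyclic subgraph_sub_adj);
    last by rewrite adj_sym.
  apply: (subrel_connect_through adj_irr adj_sym adj_acyclic subgraph_sub_adj (b := y));
    rewrite ?(adj_sym _ j) //.
  by apply: ER_conn; apply: cover_mem; rewrite eq_sym (adj_neq adj_irr).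
apply/subsetP => p pE; have := pE; rewrite inE => /andP [_ Hp].
have [E1|H1] := eqVneq p.1 j.
  by apply: (subgraph_mem_edge pE); rewrite sub_adj_sym E1 to_j // -E1.
have [E2|H2] := eqVneq p.2 j.
  by apply: (subgraph_mem_edge pE); rewrite E2 to_j // -E2 adj_sym.
by apply: (subsetP connected_cover_avoiding); rewrite inE pE H1 H2.
Qed.

End ConnectedCover.

Lemma tree_is_D_Dhat j : is_D adj w [set~ j] (tree_Dhat adj w j).
Proof.
rewrite /tree_Dhat; case: ifP => Hj; split.
- exists [set~ j], (edges_avoiding adj j); split => //.
    by move=> p; rewrite !inE => /andP [/andP [H1 H2] /andP [H3 H4]]; split.
  move=> x y; rewrite !inE => Hx Hy.
  have [p Hp [Hl Hall]] :=
    connect_avoid_leaf adj_sym Hj Hx Hy (tree_connected adj_tree x y).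
  apply/connectP; exists p => //.
  apply: (sub_in_path (P := predC1 j)) Hall Hp => a b /= Ha Hb Hab.
  exact: sub_adj_edges_avoiding.
- move=> VR ER Hs Hc HV.
  exact: sub_weight_le (connected_cover_avoiding Hs Hc HV) (subgraph_edges Hs).
- exists setT, (tree_edges adj); split; rewrite ?subsetT //.
    by move=> p; rewrite inE => /andP [H1 H2]; split; rewrite ?inE.
  move=> x y _ _; rewrite (eq_connect sub_adj_tree_edges).
  exact: tree_connected.
- move=> VR ER Hs Hc HV.
  exact: sub_weight_le (connected_cover_internal Hs Hc HV (negbT Hj)) (subgraph_edges Hs).
Qed.

End TreeDhat.

Definition dhat_conditions (R : realFieldType) n (D : 'I_n -> R) : Prop :=
  [/\ (forall i, (n - 2)%:R * D i <= \sum_(j | j != i) D j) /\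
      (forall i j, (n - 2)%:R * D i = \sum_(k | k != i) D k ->
                   (n - 2)%:R * D j = \sum_(k | k != j) D k -> i = j),
      (exists i, (n - 2)%:R * D i = \sum_(j | j != i) D j) \/
      (exists i j, i != j /\ forall k, D k <= D i /\ D k <= D j)
    & (#|[set i : 'I_n | [forall k : 'I_n, (D k <= D i)%R]]| <= n - 2)%N].

Lemma eq_dhat_conditions (R : realFieldType) n (D D' : 'I_n -> R) :
  D =1 D' -> dhat_conditions D' -> dhat_conditions D.
Proof.
move=> eD; have eS i : \sum_(j | j != i) D j = \sum_(j | j != i) D' j by apply: eq_bigr.
rewrite /dhat_conditions.
have -> : [set i | [forall k, D k <= D i]] = [set i | [forall k, D' k <= D' i]].
  by apply/setP => i; rewrite !inE; apply/eq_forallb => k; rewrite !eD.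
case=> [[le_excess tight_unique] tight_or_two_max few_max]; split => //.
- by split=> [i | i j]; rewrite ?eD ?eS //; exact: tight_unique.
case: tight_or_two_max => [[i]|[i [j [ij Hmax]]]]; [left; exists i | right; exists i, j].
  by rewrite eD eS.
by split=> // k; rewrite !eD.
Qed.

(* Valid for every M; both directions use it with M the largest value of D. *)
Lemma sum_others_excess (R : comRingType) n (D : 'I_n -> R) (M : R) i : (1 < n)%N ->
  \sum_(j | j != i) D j - (n - 2)%:R * D i =
  (n - 1)%:R * (M - D i) + (M - \sum_j (M - D j)).
Proof.
move=> n_gt1; rewrite sumrB sumr_const card_ord [in RHS](bigD1 i) //= -mulr_natr.
rewrite !natrB ?(ltnW n_gt1) //; ring.
Qed.

Section Excess.
Variables (R : realFieldType) (n : nat) (D : 'I_n -> R) (M : R).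
Hypotheses (n_gt1 : (1 < n)%N) (D_le : forall j, D j <= M).
Hypothesis deficit_le : \sum_j (M - D j) <= M.

Lemma excess_ge0 i : (n - 2)%:R * D i <= \sum_(j | j != i) D j.
Proof.
rewrite -subr_ge0 (sum_others_excess _ M) // addr_ge0 ?subr_ge0 //.
by rewrite mulr_ge0 ?ler0n ?subr_ge0.
Qed.

Lemma excess_eq0P i : (n - 2)%:R * D i = \sum_(j | j != i) D j <->
  D i = M /\ \sum_j (M - D j) = M.
Proof.
have n1_gt0 : 0 < (n - 1)%:R :> R by rewrite ltr0n subn_gt0.
have E := sum_others_excess D M i n_gt1.
split => [Heq | [Di T]]; last by apply/eqP; rewrite eq_sym -subr_eq0 E Di T !subrr mulr0 addr0.
move/eqP: E; rewrite -Heq subrr eq_sym paddr_eq0 ?mulr_ge0 ?ler0n ?subr_ge0 //.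
by rewrite mulf_eq0 gt_eqF //= !subr_eq0 => /andP [/eqP <- /eqP <-].
Qed.

End Excess.

Section TreeNecessity.
Variables (R : realFieldType) (n : nat) (adj : rel 'I_n) (w : 'I_n -> 'I_n -> R).
Hypotheses (adj_tree : is_tree adj) (w_pos : pos_weights adj w) (n_ge3 : (3 <= n)%N).

Let adj_irr := tree_irr adj_tree.
Let adj_sym := tree_sym adj_tree.
Let adj_conn := tree_connected adj_tree.
Let n_gt1 : (1 < n)%N := ltnW n_ge3.
Local Notation W := (total_weight adj w).
Local Notation Dhat := (tree_Dhat adj w).

Definition leaf_edge_weight : R :=
  \sum_(p in tree_edges adj | leaf adj p.1 || leaf adj p.2) w p.1 p.2.

Lemma exists_neighbour j : exists u, adj j u.
Proof.
have [x Hx] : exists x : 'I_n, x != j.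
  have [->|] := eqVneq j (Ordinal n_gt1); last by exists (Ordinal n_gt1); rewrite eq_sym.
  by exists (Ordinal (ltnW n_gt1)).
case/connectP: (adj_conn j x) => [[|u p]] /= Hp Hl; first by rewrite -Hl eqxx in Hx.
by exists u; case/andP: Hp.
Qed.

Lemma no_adjacent_leaves a b : adj a b -> leaf adj a -> leaf adj b -> False.
Proof.
move=> Hab /leafP La /leafP Lb.
have [x /andP [Hxa Hxb]] : exists x : 'I_n, (x != a) && (x != b).
  apply/existsP; apply: contraT => /existsPn Hnone.
  have : (#|'I_n| <= #|[set a; b]|)%N.
    apply/subset_leq_card/subsetP => x _; move: (Hnone x).
    by rewrite !inE negb_and !negbK.
  by rewrite card_ord cards2 => /(leq_trans n_ge3); case: (a != b).
case/connectP: (adj_conn a x) => p0 Hp0 Hl0.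
case: (shortenP Hp0) Hl0 => p Hp Hu _ Hl.
case: p Hp Hu Hl => [|y [|z q]] /= Hp Hu Hl; first by rewrite Hl eqxx in Hxa.
  by case/andP: Hp => Hy _; rewrite Hl (La _ _ Hy Hab) eqxx in Hxb.
case/and3P: Hp => Hy Hz _; have Eyb := La _ _ Hy Hab; subst y.
have Eza : z = a by apply: Lb; rewrite // adj_sym.
by subst z; move: Hu; rewrite !inE eqxx orbT.
Qed.

Lemma exists_internal : exists c, ~~ leaf adj c.
Proof.
have [a [b Hab]] : exists a b, adj a b.
  by have [b Hb] := exists_neighbour (Ordinal (ltnW n_gt1)); exists (Ordinal (ltnW n_gt1)), b.
case: (boolP (leaf adj a)) => La; last by exists a.
case: (boolP (leaf adj b)) => Lb; last by exists b.
by case: (no_adjacent_leaves Hab La Lb).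
Qed.

Lemma star_center_unique i j : (forall a b, adj a b -> leaf adj a || leaf adj b) ->
  ~~ leaf adj i -> ~~ leaf adj j -> i = j.
Proof.
move=> leaf_edge Li Lj; have [//|Hij] := eqVneq i j; exfalso.
case/connectP: (adj_conn i j) => p0 Hp0 Hl0.
case: (shortenP Hp0) Hl0 => p Hp Hu _ Hl.
case: p Hp Hu Hl => [|x [|y q]] /= Hp Hu Hl; first by rewrite Hl eqxx in Hij.
  by case/andP: Hp => /leaf_edge; rewrite (negbTE Li) -Hl (negbTE Lj).
case/and3P: Hp => Hix Hxy _; have := leaf_edge _ _ Hix; rewrite (negbTE Li) => /leafP Lx.
have Eyi : y = i by apply: Lx; rewrite // adj_sym.
by subst y; move: Hu; rewrite !inE eqxx orbT.
Qed.

Lemma total_sub_Dhat j : W - Dhat j =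
  \sum_(p in tree_edges adj) (if leaf adj j && ((p.1 == j) || (p.2 == j)) then w p.1 p.2 else 0).
Proof.
rewrite /tree_Dhat; case: ifP => Hj /=; last by rewrite subrr big1.
have -> : sub_weight w (edges_avoiding adj j) =
    \sum_(p in tree_edges adj | ~~ ((p.1 == j) || (p.2 == j))) w p.1 p.2.
  by apply: eq_bigl => p; rewrite inE negb_or.
rewrite -big_mkcondr /total_weight /sub_weight.
by rewrite (bigID (fun p => (p.1 == j) || (p.2 == j))) addrK.
Qed.

Lemma tree_Dhat_le j : Dhat j <= W.
Proof.
rewrite -subr_ge0 total_sub_Dhat; apply: sumr_ge0 => p pE.
by case: ifP => _ //; exact: (tree_edge_weight_ge0 w_pos).
Qed.

Lemma tree_Dhat_lt_leaf j : leaf adj j -> Dhat j < W.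
Proof.
move=> Lj; rewrite -subr_gt0 total_sub_Dhat; have [u Hu] := exists_neighbour j.
have pE := edge_of_mem adj_irr adj_sym Hu.
rewrite (bigD1 (edge_of j u)) //= Lj edge_of_incident.
apply: (lt_le_trans (w_pos (edge_of_adj adj_sym Hu))); rewrite lerDl.
by apply: sumr_ge0 => p /andP [pE' _]; case: ifP => _ //; exact: (tree_edge_weight_ge0 w_pos).
Qed.

Lemma tree_Dhat_eq_total j : (Dhat j == W) = ~~ leaf adj j.
Proof.
case: (boolP (leaf adj j)) => Lj; first by rewrite lt_eqF ?tree_Dhat_lt_leaf.
by rewrite /tree_Dhat (negbTE Lj) eqxx.
Qed.

Lemma sum_total_sub_Dhat : \sum_j (W - Dhat j) = leaf_edge_weight.
Proof.
under eq_bigr do rewrite total_sub_Dhat.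
rewrite exchange_big /leaf_edge_weight big_mkcondr /=; apply: eq_bigr => p.
rewrite inE => /andP [lt12 Hp].
have p21 : p.2 != p.1 by rewrite neq_ltn lt12 orbT.
rewrite (bigD1 p.1) //= eqxx andbT (bigD1 p.2) //= eqxx orbT andbT.
rewrite big1 => [|j /andP [j2 j1]]; last first.
  by rewrite ![_ == j]eq_sym (negbTE j1) (negbTE j2) andbF.
case: (boolP (leaf adj p.1)) => L1; case: (boolP (leaf adj p.2)) => L2 /=;
  rewrite ?addr0 ?add0r //.
by case: (no_adjacent_leaves Hp L1 L2).
Qed.

Lemma total_weight_split : W = leaf_edge_weight +
  \sum_(p in tree_edges adj | ~~ (leaf adj p.1 || leaf adj p.2)) w p.1 p.2.
Proof. by rewrite /total_weight /sub_weight (bigID (fun p => leaf adj p.1 || leaf adj p.2)). Qed.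

Lemma leaf_edge_weight_le : leaf_edge_weight <= W.
Proof.
rewrite [leRHS]total_weight_split lerDl; apply: sumr_ge0 => p /andP [pE _].
exact: (tree_edge_weight_ge0 w_pos).
Qed.

Lemma leaf_edge_weight_eq_total :
  leaf_edge_weight = W <-> forall a b, adj a b -> leaf adj a || leaf adj b.
Proof.
rewrite total_weight_split; split => [/esym/eqP|leaf_edge].
  rewrite -subr_eq0 addrAC subrr add0r => /eqP S0 a b.
  wlog lt_ab : a b / (a < b)%N => [H Hab|Hab].
    case: (ltngtP a b) => [ab|ba|/val_inj Eab]; first exact: H.
      by rewrite orbC; apply: H; rewrite // adj_sym.
    by rewrite Eab adj_irr in Hab.
  apply: contraT => Hab_int; have := w_pos Hab; rewrite lt_def => /andP [/negP []].
  apply/eqP; apply: (psumr_eq0P _ S0 (i := (a, b))) => [p /andP [pE _]|].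
    exact: (tree_edge_weight_ge0 w_pos).
  by rewrite inE lt_ab Hab.
by rewrite big1 ?addr0 // => p /andP []; rewrite inE => /andP [_ /leaf_edge ->].
Qed.

Lemma tree_deficit_le : \sum_j (W - Dhat j) <= W.
Proof. by rewrite sum_total_sub_Dhat leaf_edge_weight_le. Qed.

Lemma tree_Dhat_tightP i : (n - 2)%:R * Dhat i = \sum_(j | j != i) Dhat j <->
  ~~ leaf adj i /\ forall a b, adj a b -> leaf adj a || leaf adj b.
Proof.
rewrite (excess_eq0P (ltnW n_ge3) tree_Dhat_le tree_deficit_le) sum_total_sub_Dhat.
rewrite -tree_Dhat_eq_total -leaf_edge_weight_eq_total.
by split => -[/eqP].
Qed.

Lemma tree_dhat_conditions : dhat_conditions Dhat.
Proof.
have internal_eq j : ~~ leaf adj j -> Dhat j = W.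
  by move=> Lj; apply/eqP; rewrite tree_Dhat_eq_total.
have [c Lc] := exists_internal.
split.
- split; first exact: excess_ge0 (ltnW n_ge3) tree_Dhat_le tree_deficit_le.
  move=> i j /tree_Dhat_tightP [Li leaf_edge] /tree_Dhat_tightP [Lj _].
  exact: star_center_unique.
- case: (pickP (fun j => (j != c) && ~~ leaf adj j)) => [j /andP [jc Lj]|no_other].
    right; exists j, c; split => // k.
    by rewrite (internal_eq j) // (internal_eq c) // tree_Dhat_le.
  left; exists c; apply/tree_Dhat_tightP; split => // a b Hab.
  have center x : ~~ leaf adj x -> x = c.
    by move=> Lx; apply/eqP; move: (no_other x); rewrite Lx andbT => /negbFE.
  apply: contraT; rewrite negb_or => /andP [/center Ea /center Eb].
  by rewrite Ea Eb adj_irr in Hab.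
- have [u Hu] := exists_neighbour c.
  have [l1 [l2 [l12 L1 L2]]] := exists_two_leaves adj_irr adj_sym (tree_acyclic adj_tree) Hu.
  apply: (@leq_trans #|~: [set l1; l2]|).
    apply/subset_leq_card/subsetP => i; rewrite !inE negb_or => /forallP /(_ c).
    rewrite internal_eq // => Wi.
    by apply/andP; split; apply: contraTneq Wi => ->; rewrite -ltNge tree_Dhat_lt_leaf.
  by have := cardsC [set l1; l2]; rewrite cards2 l12 card_ord; lia.
Qed.

End TreeNecessity.

Definition parent_adj n (par : 'I_n -> 'I_n) : rel 'I_n :=
  fun a b => (a != b) && ((par a == b) || (par b == a)).

Section ParentTree.
Variables (n : nat) (par : 'I_n -> 'I_n) (rank : 'I_n -> nat) (root : 'I_n).
Hypothesis par_root : par root = root.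
Hypothesis rank_par : forall v, v != root -> (rank (par v) < rank v)%N.

Local Notation adj := (parent_adj par).

Lemma par_neq v : v != root -> par v != v.
Proof. by move/rank_par; apply: contraTneq => ->; rewrite ltnn. Qed.

Lemma par_par_neq v : v != root -> par (par v) != v.
Proof.
move=> Hv; apply/eqP => E; have lt1 := rank_par Hv.
have Hpv : par v != root by apply: contraNneq Hv => E2; rewrite -E E2 par_root.
by have := rank_par Hpv; rewrite E ltnNge (ltnW lt1).
Qed.

Lemma parent_adj_sym : symmetric adj.
Proof. by move=> a b; rewrite /parent_adj eq_sym orbC. Qed.

Lemma parent_adj_par v : v != root -> adj v (par v).
Proof. by move=> Hv; rewrite /parent_adj eq_sym par_neq // eqxx. Qed.

Lemma parent_adjP v x : adj v x -> par v = x \/ par x = v /\ x != root.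
Proof.
case/andP => Hvx /orP [/eqP -> |/eqP Hx]; [by left | right; split => //].
by apply: contraNneq Hvx => Ex; rewrite -Hx Ex par_root.
Qed.

Lemma connect_root v : connect adj v root.
Proof.
elim: {v}(rank v).+1 {-2}v (ltnSn (rank v)) => // k IH v.
have [-> _|Hv Hk] := eqVneq v root; first exact: connect0.
apply: connect_trans (connect1 (parent_adj_par Hv)) (IH _ _).
exact: leq_trans (rank_par Hv) _.
Qed.

(* On a cycle, both neighbours of a vertex of maximal rank would have to be its parent. *)
Lemma parent_adj_acyclic : acyclic adj.
Proof.
move=> [//|x0 s0] Hu Hs; apply/negP => Hc.
case: (arg_maxnP rank (mem_head x0 s0)) => v Hv Hmax.
case: (rot_to Hv) => i s' Ei.
have Hu' : uniq (v :: s') by rewrite -Ei rot_uniq.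
have Hc' : cycle adj (v :: s') by rewrite -Ei rot_cycle.
have Hs' : (3 <= size (v :: s'))%N by rewrite -Ei size_rot.
have to_par x : x \in v :: s' -> adj v x -> x = par v.
  move=> Hx Hvx; case: (parent_adjP Hvx) => [//|[Hxv Hxr]].
  have : (rank x <= rank v)%N by apply: Hmax; rewrite -Ei mem_rot in Hx.
  by have := rank_par Hxr; rewrite Hxv ltnNge => /negP.
clear Ei; case: s' Hu' Hc' Hs' to_par => [|a [|b t]] //= Hu' Hc' _ to_par.
move: Hc' => /andP [Ha]; rewrite rcons_path => /andP [_ /andP [_ Hl]].
have Ea : a = par v by apply: (to_par a) => //; rewrite !inE eqxx orbT.
have Eb : last b t = par v.
  apply: to_par; last by rewrite parent_adj_sym.
  by rewrite (in_cons v) (in_cons a) mem_last !orbT.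
case/and3P: Hu' => _ /negP []; rewrite Ea -Eb; exact: mem_last.
Qed.

Lemma parent_adj_tree : is_tree adj.
Proof.
split; first by split => [i|]; [rewrite /parent_adj eqxx | exact: parent_adj_sym].
split; last exact: parent_adj_acyclic.
move=> x y; apply: connect_trans (connect_root x) _.
by rewrite (sym_connect_sym parent_adj_sym) connect_root.
Qed.

Lemma childless_leaf l : (forall x, par x != l) -> leaf adj l.
Proof.
move=> Hl; apply: (@leq_trans #|[set par l]|); last by rewrite cards1.
apply/subset_leq_card/subsetP => x; rewrite !inE => /andP [_ /orP [/eqP -> //|]].
by rewrite (negbTE (Hl x)).
Qed.

Variables (R : numDomainType) (wt : 'I_n -> R).

Definition parent_weight (a b : 'I_n) : R := if par b == a then wt b else wt a.

Lemma parent_weight_edge v : v != root ->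
  parent_weight (edge_of v (par v)).1 (edge_of v (par v)).2 = wt v.
Proof.
move=> Hv; rewrite /edge_of; case: ifP => _; rewrite /parent_weight /= ?eqxx //.
by rewrite (negbTE (par_par_neq Hv)).
Qed.

Lemma tree_edges_parent : tree_edges adj = [set edge_of v (par v) | v in [set v | v != root]].
Proof.
apply/setP => -[a b]; apply/idP/imsetP; last first.
  case=> v; rewrite inE => Hv ->; apply: edge_of_mem; last exact: parent_adj_par.
    by move=> x; rewrite /parent_adj eqxx.
  exact: parent_adj_sym.
rewrite inE /= => /andP [lt_ab Hab].
case: (parent_adjP Hab) => [Ea|[Eb Hb]].
  exists a; last by rewrite Ea /edge_of lt_ab.
  by rewrite inE; apply: contraTneq lt_ab => Ear; rewrite -Ea Ear par_root ltnn.
by exists b; rewrite ?inE // Eb /edge_of ltnNge (ltnW lt_ab).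
Qed.

Lemma edge_of_parent_inj : {in [set v | v != root] &, injective (fun v => edge_of v (par v))}.
Proof.
move=> u v; rewrite !inE => Hu Hv /= E.
have : (u = v /\ par u = par v) \/ (u = par v /\ par u = v).
  by move: E; rewrite /edge_of; case: ifP => _; case: ifP => _ [] E1 E2; tauto.
case=> [[//]|[E1 E2]].
by move: (par_par_neq Hv); rewrite -E1 E2 eqxx.
Qed.

Lemma total_weight_parent : total_weight adj parent_weight = \sum_(v | v != root) wt v.
Proof.
rewrite /total_weight /sub_weight tree_edges_parent big_imset /=;
  last exact: edge_of_parent_inj.
by apply: eq_big => v; rewrite inE // => /parent_weight_edge.
Qed.

Lemma parent_weight_pos : (forall v, v != root -> 0 < wt v) -> pos_weights adj parent_weight.
Proof.
move=> wt_pos a b /andP [Hab /orP [/eqP Ea|/eqP Eb]]; rewrite /parent_weight.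
  case: ifP => [/eqP Eb|_]; apply: wt_pos.
    by apply: contraNneq Hab => Ebr; rewrite -Eb Ebr par_root.
  by apply: contraNneq Hab => Ear; rewrite -Ea Ear par_root.
rewrite Eb eqxx; apply: wt_pos.
by apply: contraNneq Hab => Ebr; rewrite -Eb Ebr par_root.
Qed.

Lemma avoiding_weight_childless l : (forall x, par x != l) -> l != root ->
  sub_weight parent_weight (edges_avoiding adj l) = total_weight adj parent_weight - wt l.
Proof.
move=> Hl Hlr.
have lE : edge_of l (par l) \in tree_edges adj.
  by rewrite tree_edges_parent; apply/imsetP; exists l; rewrite ?inE.
rewrite /total_weight /sub_weight [in RHS](bigD1 (edge_of l (par l))) //=.
rewrite parent_weight_edge // addrC addrK; apply: eq_bigl => p; rewrite inE.
case: (boolP (p \in tree_edges adj)) => //= pE; apply/idP/idP.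
  case/andP=> H1 H2; apply/eqP => E; have := edge_of_incident l (par l).
  by rewrite -E (negbTE H1) (negbTE H2).
move=> Hne; move: pE; case: p Hne => a b Hne; rewrite inE /= => /andP [lt_ab /andP [_ Hab]].
apply/andP; split; apply/eqP => E; move/eqP: Hne; apply; subst.
  by case/orP: Hab => /eqP Eb; [rewrite /edge_of Eb lt_ab | move: (Hl b); rewrite Eb eqxx].
case/orP: Hab => /eqP Ea; first by move: (Hl a); rewrite Ea eqxx.
by rewrite /edge_of Ea ltnNge (ltnW lt_ab).
Qed.

End ParentTree.

Section Caterpillar.
Variables (R : realFieldType) (n : nat) (D : 'I_n -> R).
Hypothesis n_ge3 : (3 <= n)%N.
Hypothesis D_excess : forall i, (n - 2)%:R * D i <= \sum_(j | j != i) D j.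
Hypothesis tight_unique : forall i j, (n - 2)%:R * D i = \sum_(k | k != i) D k ->
  (n - 2)%:R * D j = \sum_(k | k != j) D k -> i = j.
Hypothesis tight_or_two_max : (exists i, (n - 2)%:R * D i = \sum_(j | j != i) D j) \/
  (exists i j, i != j /\ forall k, D k <= D i /\ D k <= D j).
Hypothesis few_max : (#|[set i : 'I_n | [forall k : 'I_n, (D k <= D i)%R]]| <= n - 2)%N.

Let n_gt0 : (0 < n)%N. Proof. exact: leq_trans n_ge3. Qed.

Definition argmax_D : 'I_n := Order.arg_max (Ordinal n_gt0) xpredT D.
Local Notation M := (D argmax_D).
Local Notation K := [set i : 'I_n | [forall k : 'I_n, (D k <= D i)%R]].
Local Notation T := (\sum_j (M - D j)).

Lemma D_le_max i : D i <= M.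
Proof. by rewrite /argmax_D; case: arg_maxP => // m _; apply. Qed.

Lemma mem_maxset i : (i \in K) = (D i == M).
Proof.
rewrite inE; apply/forallP/eqP => [H|-> k]; last exact: D_le_max.
by apply/le_anti; rewrite D_le_max H.
Qed.

Lemma deficit_le_max : T <= M.
Proof.
have := D_excess argmax_D; rewrite -subr_ge0 (sum_others_excess _ M) ?(ltnW n_ge3) //.
by rewrite subrr mulr0 add0r subr_ge0.
Qed.

Lemma maxset_tightP i : (n - 2)%:R * D i = \sum_(j | j != i) D j <-> i \in K /\ T = M.
Proof.
rewrite (excess_eq0P (ltnW n_ge3) D_le_max deficit_le_max) mem_maxset.
by split => -[/eqP].
Qed.

Lemma deficit_single_max : #|K| = 1%N -> T = M.
Proof.
move=> K1; case: tight_or_two_max => [[i /maxset_tightP [] //]|[i [j [ij Hmax]]]].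
have [iK jK] : i \in K /\ j \in K.
  by split; rewrite inE; apply/forallP => k; case: (Hmax k).
have : (1 < #|K|)%N by apply/card_gt1P; exists i, j.
by rewrite K1.
Qed.

Lemma deficit_lt_max : (1 < #|K|)%N -> T < M.
Proof.
case/card_gt1P => i [j [iK jK ij]]; rewrite lt_def deficit_le_max andbT.
apply: contra_neq ij => TM.
by apply: tight_unique; apply/maxset_tightP.
Qed.

Definition spine i := nth argmax_D (enum K) i.

Lemma maxset_gt0 : (0 < #|K|)%N.
Proof. by apply/card_gt0P; exists argmax_D; rewrite mem_maxset. Qed.

Lemma spine_max i : (i < #|K|)%N -> spine i \in K.
Proof. by move=> Hi; rewrite -mem_enum mem_nth // -cardE. Qed.

Lemma index_spine i : (i < #|K|)%N -> index (spine i) (enum K) = i.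
Proof. by move=> Hi; rewrite index_uniq ?enum_uniq // -cardE. Qed.

Lemma index_max_lt v : v \in K -> (index v (enum K) < #|K|)%N.
Proof. by move=> Hv; rewrite cardE index_mem mem_enum. Qed.

Lemma spine_index v : v \in K -> spine (index v (enum K)) = v.
Proof. by move=> Hv; rewrite /spine nth_index // mem_enum. Qed.

Lemma exists_two_nonmax : exists l1 l2, [/\ l1 \notin K, l2 \notin K & l1 != l2].
Proof.
have : (1 < #|~: K|)%N by have := cardsC K; rewrite card_ord; lia.
by case/card_gt1P => l1 [l2 [Hl1 Hl2 l12]]; exists l1, l2; rewrite -!in_setC.
Qed.

Local Notation root := (spine 0).

Lemma index_root v : v \in K -> (index v (enum K) == 0%N) = (v == root).
Proof.
move=> Hv; apply/eqP/eqP => [E|->]; last by rewrite index_spine ?maxset_gt0.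
by rewrite -(spine_index Hv) E.
Qed.

Definition cat_rank v := if v \in K then index v (enum K) else #|K|.

(* M - D v vanishes on the spine, whose edges share M - T equally. *)
Definition cat_weight v := (if v \in K then (M - T) / (#|K|.-1)%:R else 0) + (M - D v).

Lemma cat_weight_pos v : v != root -> 0 < cat_weight v.
Proof.
move=> Hvr; rewrite /cat_weight; case: ifP => Hv; last first.
  by rewrite add0r subr_gt0 lt_def eq_sym -mem_maxset Hv D_le_max.
have K_gt1 : (1 < #|K|)%N.
  by apply: leq_trans _ (index_max_lt Hv); rewrite ltnS lt0n index_root.
rewrite (eqP (etrans (esym (mem_maxset v)) Hv)) subrr addr0 divr_gt0 //.
  by rewrite subr_gt0 deficit_lt_max.
by rewrite ltr0n -ltnS prednK // ltnW.
Qed.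

Section Construction.
Variables l1 l2 : 'I_n.
Hypotheses (l1_nonmax : l1 \notin K) (l2_nonmax : l2 \notin K) (l12 : l1 != l2).

(* The caterpillar: the maximisers form a path in enumeration order, l1 hangs
   at its first vertex and every other non-maximiser at its last one. *)
Definition cat_parent v :=
  if v \in K then spine (index v (enum K)).-1
  else if v == l1 then spine 0 else spine #|K|.-1.

Local Notation adj := (parent_adj cat_parent).
Local Notation w := (parent_weight cat_parent cat_weight).

Lemma cat_parent_max v : cat_parent v \in K.
Proof.
rewrite /cat_parent; case: ifP => Hv.
  by apply: spine_max; apply: leq_ltn_trans (leq_pred _) (index_max_lt Hv).
by case: ifP => _; apply: spine_max; rewrite ?prednK ?maxset_gt0.
Qed.

Lemma cat_parent_root : cat_parent root = root.
Proof. by rewrite /cat_parent spine_max ?index_spine ?maxset_gt0. Qed.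

Lemma cat_rank_parent v : v != root -> (cat_rank (cat_parent v) < cat_rank v)%N.
Proof.
move=> Hvr; rewrite /cat_rank cat_parent_max.
case: ifP => Hv; last exact: index_max_lt (cat_parent_max v).
rewrite /cat_parent Hv index_spine; last by apply: leq_ltn_trans (leq_pred _) (index_max_lt Hv).
by rewrite prednK // lt0n index_root.
Qed.

Lemma cat_total_weight : total_weight adj w = M.
Proof.
rewrite (total_weight_parent cat_parent_root cat_rank_parent) /cat_weight big_split /=.
have -> : \sum_(v | v != root) (M - D v) = T.
  rewrite [RHS](bigD1 root) //= (eqP (etrans (esym (mem_maxset _)) (spine_max maxset_gt0))).
  by rewrite subrr add0r.
rewrite -big_mkcondr sumr_const.
have -> : #|[pred v | (v != root) && (v \in K)]| = #|K|.-1.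
  rewrite (cardsD1 root K) spine_max ?maxset_gt0 //=.
  by apply: eq_card => v; rewrite !inE.
case: (ltngtP #|K| 1) => [K0|K_gt1|K1]; first by have := maxset_gt0; lia.
  rewrite -[X in X + T]mulr_natr mulfVK ?subrK // pnatr_eq0 -lt0n -ltnS prednK // ltnW //.
by rewrite K1 mulr0n add0r deficit_single_max.
Qed.

Lemma cat_leaf v : v \notin K -> leaf adj v.
Proof.
by move=> Hv; apply: childless_leaf => x; apply: contraNneq Hv => <-; exact: cat_parent_max.
Qed.

Lemma cat_child v : v \in K -> exists c, [/\ cat_parent c = v, c != v & c != l1].
Proof.
move=> Hv; have iv := index_max_lt Hv.
case: (ltnP (index v (enum K)).+1 #|K|) => [lt_next|last_v].
  have cK := spine_max lt_next.
  exists (spine (index v (enum K)).+1); split.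
  - by rewrite /cat_parent cK index_spine //= spine_index.
  - apply/negP => /eqP Ec; have := index_spine lt_next.
    by rewrite Ec => /eqP; rewrite eqn_leq ltnn andbF.
  - by apply: contraNneq l1_nonmax => <-.
exists l2; split.
- rewrite /cat_parent (negbTE l2_nonmax) eq_sym (negbTE l12) -[RHS](spine_index Hv).
  by congr spine; lia.
- by apply: contraNneq l2_nonmax => ->.
- by rewrite eq_sym.
Qed.

Lemma cat_internal v : v \in K -> ~~ leaf adj v.
Proof.
move=> Hv; rewrite /leaf -ltnNge; apply/card_gt1P.
have [c [Pc cv cl1]] := cat_child Hv.
have adj_c : adj v c by rewrite /parent_adj eq_sym cv Pc eqxx orbT.
have [Evr|vr] := eqVneq v root.
  exists l1, c; rewrite !inE adj_c eq_sym cl1; split => //.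
  rewrite /parent_adj /cat_parent (negbTE l1_nonmax) eqxx -Evr eqxx orbT andbT.
  by apply: contraNneq l1_nonmax => <-.
exists (cat_parent v), c; rewrite !inE adj_c (parent_adj_par cat_rank_parent vr).
split => //; apply: contraNneq (par_par_neq cat_parent_root cat_rank_parent vr) => ->.
by rewrite Pc.
Qed.

Lemma cat_Dhat i : tree_Dhat adj w i = D i.
Proof.
rewrite /tree_Dhat; case: (boolP (i \in K)) => Hi.
  by rewrite (negbTE (cat_internal Hi)) cat_total_weight; apply/esym/eqP; rewrite -mem_maxset.
rewrite cat_leaf // (avoiding_weight_childless cat_parent_root cat_rank_parent) ?cat_total_weight.
- by rewrite /cat_weight (negbTE Hi) add0r opprB addrC subrK.
- by move=> x; apply: contraNneq Hi => <-; exact: cat_parent_max.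
- by apply: contraNneq Hi => ->; exact: spine_max maxset_gt0.
Qed.

End Construction.

Lemma caterpillar_realizes : exists (adj : rel 'I_n) (w : 'I_n -> 'I_n -> R),
  [/\ is_tree adj, pos_weights adj w & forall i, is_D adj w [set~ i] (D i)].
Proof.
have [l1 [l2 [Hl1 Hl2 l12]]] := exists_two_nonmax.
have par_root := cat_parent_root l1; have rank_par := cat_rank_parent l1.
have adj_tree := parent_adj_tree par_root rank_par.
have w_pos := parent_weight_pos par_root cat_weight_pos.
exists (parent_adj (cat_parent l1)), (parent_weight (cat_parent l1) cat_weight).
by split => // i; rewrite -(cat_Dhat Hl1 Hl2 l12 i); exact: tree_is_D_Dhat.
Qed.

End Caterpillar.

Theorem theorem3p2 (R : realFieldType) (n : nat) (hn : (3 <= n)%N)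
  (D : 'I_n -> R) (hD : forall i, 0 < D i) :
  (exists (adj : rel 'I_n) (w : 'I_n -> 'I_n -> R),
     [/\ is_tree adj, pos_weights adj w &
         forall i, is_D adj w [set~ i] (D i)])
  <->
  [/\ (* (i) *)
      (forall i, (n - 2)%:R * D i <= \sum_(j | j != i) D j) /\
      (forall i j, (n - 2)%:R * D i = \sum_(k | k != i) D k ->
                   (n - 2)%:R * D j = \sum_(k | k != j) D k -> i = j),
      (* (ii) *)
      (exists i, (n - 2)%:R * D i = \sum_(j | j != i) D j) \/
      (exists i j, i != j /\ forall k, D k <= D i /\ D k <= D j)
    & (* (iii) *)
      (#|[set i : 'I_n | [forall k : 'I_n, (D k <= D i)%R]]| <= n - 2)%N].
Proof.
split=> [[adj [w [adj_tree w_pos HD]]] | [[D_excess tight_unique] tight_or_two_max few_max]].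
  apply: (eq_dhat_conditions _ (tree_dhat_conditions adj_tree w_pos hn)) => i.
  exact: is_D_unique (HD i) (tree_is_D_Dhat adj_tree w_pos i).
exact: caterpillar_realizes hn D_excess tight_unique tight_or_two_max few_max.
Qed.
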